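(* Let $D$ be a square-free integer and let $N>1$ be an odd square-free composite integer such that $\gcd(N, D)=1$. Then $N$ is a $\mathcal{G}(D)$-Carmichael number if and only if $\mathcal{F}_D(q) \mid \mathcal{F}_D(N)$ for every prime $q \mid N$.
   Context: For an integer $n \ge 2$ with $\gcd(n,D)=1$, $\mathcal{F}_D(n) := n - \left(\frac{D}{n}\right)$, where $\left(\frac{D}{n}\right)$ is the Kronecker symbol. For an integer $n \ge 2$ and a square-free integer $D$: if $D \equiv 2,3 \pmod 4$, let $\mathcal{I}_n(D) = \{a + b\sqrt{D} : a,b \in \mathbb{Z}/n\mathbb{Z}\}$ and $\mathcal{G}_n(D) = \{a + b\sqrt{D} \in \mathcal{I}_n(D) : a^2 - Db^2 \equiv 1 \pmod n\}$; if $D \equiv 1 \pmod 4$, let $\omega = \frac{1+\sqrt D}{2}$, $\mathcal{I}_n(D) = \{a + b\omega : a,b \in \mathbb{Z}/n\mathbb{Z}\}$ and $\mathcal{G}_n(D) = \{a + b\omega \in \mathcal{I}_n(D) : a^2 + ab + \frac{1-D}{4} b^2 \equiv 1 \pmod n\}$; $\mathcal{I}_n(D)$ is the ring $\mathcal{O}_L/n\mathcal{O}_L$, $L=\mathbb{Q}(\sqrt D)$, and $x \equiv y \pmod n$ means equality in $\mathcal{I}_n(D)$. For an odd composite integer $N$ with $\gcd(N,D)=1$: $N$ is a $\mathcal{G}(D)$-pseudoprime to base $\alpha \in \mathcal{G}_N(D)\setminus\{1,-1\}$ if $\alpha^{\mathcal{F}_D(N)} \equiv 1 \pmod N$; $N$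 is a $\mathcal{G}(D)$-Carmichael number if it is a $\mathcal{G}(D)$-pseudoprime to every base, i.e. $\alpha^{\mathcal{F}_D(N)} \equiv 1 \pmod N$ for every $\alpha \in \mathcal{G}_N(D)$. *)

From mathcomp Require Import all_boot all_order all_algebra.
Set Implicit Arguments. Unset Strict Implicit. Unset Printing Implicit Defensive.
Import Order.TTheory GRing.Theory Num.Theory.
Local Open Scope ring_scope.

Definition squarefree_nat (n : nat) : Prop :=
  (0 < n)%N /\ forall p : nat, prime p -> ~~ (p * p %| n)%N.
Definition squarefree_int (D : int) : Prop := squarefree_nat `|D|%N.

Definition kron_prime (D : int) (p : nat) : int :=
  if p == 2%N then
    (if (2 %| D)%Z then 0
     else if ((D %% 8)%Z == 1) || ((D %% 8)%Z == 7) then 1 else -1)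
  else if (p%:Z %| D)%Z then 0
  else if [exists x : 'I_p, (p%:Z %| (x%:Z) ^+ 2 - D)%Z] then 1 else -1.

Definition kronecker (D : int) (n : nat) : int :=
  \prod_(p <- primes n) kron_prime D p ^+ logn p n.

Definition FD (D : int) (n : nat) : int := n%:Z - kronecker D n.

(* Elements a + b*sqrt D (D = 2,3 mod 4) or a + b*omega (D = 1 mod 4),
   omega = (1+sqrt D)/2, represented by integer pairs (a, b). *)
Definition qmul (D : int) (x y : int * int) : int * int :=
  let: (a, b) := x in let: (c, d) := y in
  if (D %% 4)%Z == 1 then
    (a * c + b * d * ((D - 1) %/ 4)%Z, a * d + b * c + b * d)
  else (a * c + D * b * d, a * d + b * c).

Definition qnorm (D : int) (x : int * int) : int :=
  let: (a, b) := x in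
  if (D %% 4)%Z == 1 then a ^+ 2 + a * b + ((1 - D) %/ 4)%Z * b ^+ 2
  else a ^+ 2 - D * b ^+ 2.

Definition qpow (D : int) (x : int * int) (k : nat) : int * int :=
  iter k (qmul D x) (1, 0).

(* equality in I_n(D) = O_L / n O_L *)
Definition qeqmod (n : nat) (x y : int * int) : Prop :=
  (x.1 == y.1 %[mod n%:Z])%Z /\ (x.2 == y.2 %[mod n%:Z])%Z.

Definition inG (D : int) (n : nat) (x : int * int) : Prop :=
  (qnorm D x == 1 %[mod n%:Z])%Z.

(* N is a G(D)-Carmichael number (N odd composite, gcd(N, D) = 1, and
   alpha^{F_D(N)} = 1 in I_N(D) for every alpha in G_N(D)).
   F_D(N) >= N - 1 > 0 here, so the exponent is `|F_D(N)|. *)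
Definition G_Carmichael (D : int) (N : nat) : Prop :=
  [/\ odd N, (1 < N)%N, ~~ prime N, coprimez N%:Z D &
   forall x : int * int, inG D N x -> qeqmod N (qpow D x `|FD D N|%N) (1, 0)].

From mathcomp Require Import all_boot all_order all_algebra all_field cyclic.
From mathcomp Require Import ring zify.
Set Implicit Arguments. Unset Strict Implicit. Unset Printing Implicit Defensive.
Import GRing.Theory.
Local Open Scope ring_scope.

(* For a prime q dividing N take a field K of characteristic q containing a
   square root t of D: F_q when D is a square mod q, F_q[X]/(X^2 - D)
   otherwise.  The two maps a + b w |-> a + b w(t), a + b w(-t) embed O_L/q
   into K x K and identify G_q(D) with the pairs (u, u^-1) they reach.  In the
   split case these are all of F_q^*, cyclic of order q - 1; in the inert case
   the second map is the first followed by Frobenius, so G_q(D) is the subgroup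
   of order q + 1 of the cyclic group F_(q^2)^*.  Either way G_q(D) has
   exponent |F_D(q)|, and as N is square-free the Chinese remainder theorem
   makes G_N(D) the product of the G_q(D). *)

Lemma divz4_eq1 (D : int) : (D %% 4)%Z = 1 ->
  ((D - 1) %/ 4)%Z * 4 + 1 = D /\ ((1 - D) %/ 4)%Z = - ((D - 1) %/ 4)%Z.
Proof.
move=> D4; have E := divz_eq D 4; rewrite D4 in E.
have -> : D - 1 = (D %/ 4)%Z * 4 by rewrite {1}E; ring.
have -> : 1 - D = - (D %/ 4)%Z * 4 by rewrite {1}E; ring.
by rewrite !mulzK // -E.
Qed.

Lemma eqz_modD (n a a' b b' : int) : (a = a' %[mod n])%Z -> (b = b' %[mod n])%Z ->
  (a + b = a' + b' %[mod n])%Z.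
Proof. by move=> ea eb; rewrite -modzDm ea eb modzDm. Qed.

Lemma eqz_modM (n a a' b b' : int) : (a = a' %[mod n])%Z -> (b = b' %[mod n])%Z ->
  (a * b = a' * b' %[mod n])%Z.
Proof. by move=> ea eb; rewrite -modzMm ea eb modzMm. Qed.

Lemma eqz_modN (n a a' : int) : (a = a' %[mod n])%Z -> (- a = - a' %[mod n])%Z.
Proof. by move=> ea; rewrite -modzNm ea modzNm. Qed.

Lemma qeqmod_trans n x y z : qeqmod n x y -> qeqmod n y z -> qeqmod n x z.
Proof. by rewrite /qeqmod => -[/eqP -> /eqP ->]. Qed.

Lemma qmul_eqmod D n x x' y y' : qeqmod n x x' -> qeqmod n y y' ->
  qeqmod n (qmul D x y) (qmul D x' y').
Proof.
case: x x' y y' => [a b] [a' b'] [c d] [c' d'] [/eqP ea /eqP eb] [/eqP ec /eqP ed].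
by rewrite /qmul; case: ifP => _; split; apply/eqP;
  repeat (apply: eqz_modD || apply: eqz_modM).
Qed.

Lemma qpow_eqmod D n x y k : qeqmod n x y -> qeqmod n (qpow D x k) (qpow D y k).
Proof.
move=> xy; elim: k => [|k IHk]; first by split.
by rewrite /qpow !iterS; apply: qmul_eqmod.
Qed.

Lemma qnorm_eqmod D n x y : qeqmod n x y -> (qnorm D x == qnorm D y %[mod n%:Z])%Z.
Proof.
case: x y => [a b] [c d] [/eqP ea /eqP eb]; apply/eqP.
by rewrite /qnorm !expr2; case: ifP => _;
  repeat (apply: eqz_modD || apply: eqz_modM || apply: eqz_modN).
Qed.

Lemma qnorm1 D : qnorm D (1, 0) = 1.
Proof. by rewrite /qnorm; case: ifP => _; ring. Qed.

Lemma inG_chinese D q M x : coprime q M -> inG D q x ->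
  exists2 y, inG D (q * M) y & qeqmod q x y.
Proof.
move=> coqM xG; have co : coprimez q M by [].
pose y := (zchinese q M x.1 1, zchinese q M x.2 0).
have xy : qeqmod q x y by split; apply/eqP; rewrite zchinese_modl.
have y1 : qeqmod M y (1, 0) by split; apply/eqP; rewrite zchinese_modr.
exists y => //; rewrite /inG PoszM zchinese_remainder //.
by rewrite -(eqP (qnorm_eqmod D xy)) (eqP (qnorm_eqmod D y1)) qnorm1 xG eqxx.
Qed.

Lemma qeqmod_dvd n m x y : (m %| n)%N -> qeqmod n x y -> qeqmod m x y.
Proof.
move=> mn; have mnz : (m%:Z %| n%:Z)%Z by rewrite dvdzE.
by rewrite /qeqmod !eqz_mod_dvd => -[x1 x2]; split; apply: dvdz_trans mnz _.
Qed.

Lemma inG_dvd D n m x : (m %| n)%N -> inG D n x -> inG D m x.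
Proof.
move=> mn; have mnz : (m%:Z %| n%:Z)%Z by rewrite dvdzE.
by rewrite /inG !eqz_mod_dvd; apply: dvdz_trans mnz.
Qed.

Lemma squarefree_coprime_cofactor N q : squarefree_nat N -> prime q -> (q %| N)%N ->
  coprime q (N %/ q).
Proof.
case=> _ sqN q_pr qN; rewrite prime_coprime //; apply: contra (sqN q q_pr) => qM.
by rewrite -[N](divnK qN) dvdn_mul.
Qed.

Lemma squarefree_dvdz N z : squarefree_nat N ->
  (forall p, prime p -> (p %| N)%N -> (p%:Z %| z)%Z) -> (N%:Z %| z)%Z.
Proof.
case=> N_gt0 sqN pz; rewrite dvdzE /=; apply/(dvdn_partP _ N_gt0) => p.
rewrite mem_primes => /and3P[p_pr _ pN].
have -> : (N`_p)%N = p.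
  rewrite p_part (_ : logn p N = 1%N) ?expn1 //; apply/eqP; rewrite eqn_leq.
  rewrite -(pfactor_dvdn 1 p_pr N_gt0) expn1 pN andbT.
  by rewrite leqNgt -(pfactor_dvdn 2 p_pr N_gt0) sqN.
by have := pz p p_pr pN; rewrite dvdzE.
Qed.

Lemma qeqmod_squarefree N x y : squarefree_nat N ->
  (forall p, prime p -> (p %| N)%N -> qeqmod p x y) -> qeqmod N x y.
Proof.
move=> sqN xy; rewrite /qeqmod !eqz_mod_dvd.
split; apply: squarefree_dvdz => // p p_pr pN;
  by have [] := xy p p_pr pN; rewrite !eqz_mod_dvd.
Qed.

Section QuadraticEmbedding.
Variables (K : fieldType) (D : int).

Definition qomega (t : K) : K := if (D %% 4)%Z == 1 then (1 + t) / 2%:R else t.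
Definition qembed (t : K) (x : int * int) : K := x.1%:~R + x.2%:~R * qomega t.

Lemma qembed1 t : qembed t (1, 0) = 1.
Proof. by rewrite /qembed /= mul0r addr0. Qed.

Variable t : K.
Hypotheses (tD : t ^+ 2 = D%:~R) (two_neq0 : (2%:R : K) != 0).

Lemma four_neq0 : (4%:R : K) != 0.
Proof. by rewrite (natrM K 2 2) mulf_neq0. Qed.

Lemma qomega_sq : qomega t ^+ 2 =
  if (D %% 4)%Z == 1 then qomega t + ((D - 1) %/ 4)%Z%:~R else D%:~R.
Proof.
rewrite /qomega; case: (D %% 4 =P 1)%Z => [/divz4_eq1[DE _] | _] //.
have t2 : t ^+ 2 = ((D - 1) %/ 4)%Z%:~R * 4%:R + 1 by rewrite tD -{1}DE intrD intrM.
apply: (mulIf four_neq0).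
have -> : ((1 + t) / 2%:R) ^+ 2 * 4%:R = 1 + 2%:R * t + t ^+ 2 by field.
by rewrite t2; field.
Qed.

Lemma qembedM x y : qembed t (qmul D x y) = qembed t x * qembed t y.
Proof.
case: x y => [a b] [c d]; rewrite /qmul /qembed /=.
have -> : (a%:~R + b%:~R * qomega t) * (c%:~R + d%:~R * qomega t) =
  a%:~R * c%:~R + (a%:~R * d%:~R + b%:~R * c%:~R) * qomega t
  + b%:~R * d%:~R * qomega t ^+ 2 :> K by ring.
by rewrite qomega_sq; case: ifP => _; rewrite !(intrD, intrM); ring.
Qed.

Lemma qembedX x k : qembed t (qpow D x k) = qembed t x ^+ k.
Proof.
elim: k => [|k IHk]; first exact: qembed1.
by rewrite /qpow iterS -/(qpow D x k) qembedM IHk exprS.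
Qed.

Lemma qembed_norm x : qembed t x * qembed (- t) x = (qnorm D x)%:~R.
Proof.
case: x => a b; rewrite /qembed /qomega /qnorm /=.
case: (D %% 4 =P 1)%Z => [/divz4_eq1[DE ->] | _].
  have -> : (a%:~R + b%:~R * ((1 + t) / 2%:R)) * (a%:~R + b%:~R * ((1 - t) / 2%:R))
     = a%:~R ^+ 2 + a%:~R * b%:~R + b%:~R ^+ 2 * (1 - t ^+ 2) / 4%:R :> K.
    by field; rewrite two_neq0 four_neq0.
  rewrite tD -{1}DE !(intrD, intrM, intrN, rmorphXn) /=.
  by field; rewrite four_neq0.
have -> : (a%:~R + b%:~R * t) * (a%:~R + b%:~R * - t)
   = a%:~R ^+ 2 - b%:~R ^+ 2 * t ^+ 2 :> K by ring.
by rewrite tD !(intrD, intrM, intrN, rmorphXn) /=; ring.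
Qed.

Lemma qomega_sub_neq0 : t != 0 -> qomega t - qomega (- t) != 0.
Proof.
move=> t_neq0; rewrite /qomega; case: ifP => _.
  by have -> : (1 + t) / 2%:R - (1 - t) / 2%:R = t :> K by field.
have -> : t - - t = 2%:R * t :> K by ring.
by rewrite mulf_neq0.
Qed.

Lemma qembed_span (a b : int) : exists x,
  qembed t x = a%:~R + b%:~R * t /\ qembed (- t) x = a%:~R - b%:~R * t.
Proof.
exists (if (D %% 4)%Z == 1 then (a - b, 2 * b) else (a, b)).
rewrite /qembed /qomega; case: ifP => _ /=; rewrite ?(intrB, intrM) /=;
  split; by [field | ring].
Qed.

Lemma qembed_conj_span (u v : K) (a b : int) : t != 0 ->
    a%:~R = (u + v) / 2%:R -> b%:~R = (u - v) / (2%:R * t) ->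
  exists x, qembed t x = u /\ qembed (- t) x = v.
Proof.
move=> t0 au bu; have [x [xt xmt]] := qembed_span a b.
by exists x; rewrite xt xmt au bu; split; field; rewrite t0 two_neq0.
Qed.

End QuadraticEmbedding.

Lemma rmorph_qembed (K L : fieldType) (f : {rmorphism K -> L}) D t x :
  f (qembed D t x) = qembed D (f t) x.
Proof.
rewrite /qembed /qomega rmorphD rmorphM !rmorph_int; case: ifP => _ //.
by rewrite fmorph_div rmorphD rmorph1 rmorph_nat.
Qed.

Definition norm1_exponent (D : int) (K : fieldType) (t : K) (n : nat) : Prop :=
  (forall x, qembed D t x * qembed D (- t) x = 1 -> qembed D t x ^+ n = 1) /\
  exists2 x, qembed D t x * qembed D (- t) x = 1 & n.-primitive_root (qembed D t x).

Section CharacteristicQ.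
Variables (K : fieldType) (q : nat) (D : int) (t : K).
Hypotheses (q_prime : prime q) (q_odd : odd q) (charK : q \in [pchar K]).
Hypotheses (q_ndvd_D : ~~ (q%:Z %| D)%Z) (tD : t ^+ 2 = D%:~R).

Lemma intr_eq_pchar (z1 z2 : int) :
  ((z1%:~R : K) == z2%:~R) = (z1 == z2 %[mod q%:Z])%Z.
Proof. by rewrite eqz_mod_dvd (dvdz_pcharf charK) intrB subr_eq0. Qed.

Lemma two_neq0_pchar : (2%:R : K) != 0.
Proof.
rewrite -(dvdn_pcharf charK); apply: contraL q_odd => /(dvdn_leq (isT : 0 < 2)%N).
by case: q q_prime => [|[|[|]]].
Qed.

Lemma sqrt_neq0_pchar : t != 0.
Proof.
apply: contraNneq q_ndvd_D => t0.
by rewrite (dvdz_pcharf charK) -tD t0 expr0n.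
Qed.

Lemma qeqmod_qembedP x y : qeqmod q x y <->
  qembed D t x = qembed D t y /\ qembed D (- t) x = qembed D (- t) y.
Proof.
case: x y => [a b] [c d]; rewrite /qeqmod /qembed /= -!intr_eq_pchar.
split=> [[/eqP -> /eqP ->] // | [Et Emt]].
have bd : b%:~R = d%:~R :> K.
  have : (b%:~R - d%:~R) * (qomega D t - qomega D (- t)) = 0 :> K.
    have -> : (b%:~R - d%:~R) * (qomega D t - qomega D (- t)) =
      (a%:~R + b%:~R * qomega D t) - (a%:~R + b%:~R * qomega D (- t))
      - ((c%:~R + d%:~R * qomega D t) - (c%:~R + d%:~R * qomega D (- t))) :> K by ring.
    by rewrite Et Emt subrr.
  move/eqP; rewrite mulf_eq0 (negPf (qomega_sub_neq0 D two_neq0_pchar sqrt_neq0_pchar)).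
  by rewrite orbF subr_eq0 => /eqP.
by rewrite bd in Et; rewrite (addIr _ Et) bd !eqxx.
Qed.

Lemma inG_qembedP x : inG D q x <-> qembed D t x * qembed D (- t) x = 1.
Proof.
by rewrite /inG -intr_eq_pchar (qembed_norm tD two_neq0_pchar x) rmorph1; split=> /eqP.
Qed.

Lemma norm1_exponentP n m : norm1_exponent D t n ->
  (forall x, inG D q x -> qeqmod q (qpow D x m) (1, 0)) <-> (n %| m)%N.
Proof.
have mtD : (- t) ^+ 2 = D%:~R by rewrite sqrrN.
have two := two_neq0_pchar.
case=> expK [x0 /inG_qembedP x0G x0prim].
split=> [G_m | /dvdnP[k ->] x /inG_qembedP xG].
  have [x0m _] := (qeqmod_qembedP (qpow D x0 m) (1, 0)).1 (G_m x0 x0G).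
  by rewrite (prim_order_dvd x0prim) -(qembedX tD two) x0m qembed1.
have xn := expK x xG.
have mxn : qembed D (- t) x ^+ n = 1.
  by have := congr1 (fun z => z ^+ n) xG; rewrite exprMn xn mul1r expr1n.
apply/qeqmod_qembedP.
by rewrite (qembedX tD two) (qembedX mtD two) !qembed1 mulnC !exprM xn mxn !expr1n.
Qed.

End CharacteristicQ.

Lemma expf_card_pred (F : finFieldType) (u : F) : u != 0 -> u ^+ #|F|.-1 = 1.
Proof.
move=> u0; apply: (mulIf u0); rewrite mul1r -exprSr prednK ?expf_card //.
by apply/card_gt0P; exists 0.
Qed.

Lemma finField_prim_root (F : finFieldType) : exists g : F, (#|F|.-1).-primitive_root g.
Proof.
have F_gt1 : (1 < #|F|)%N by rewrite (cardD1 0) (cardD1 1) !inE oner_eq0.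
have : has (#|F|.-1).-primitive_root (enum (predC1 (0 : F))).
  apply: has_prim_root; first by rewrite -ltnS prednK // ltnW.
  - by apply/allP => u; rewrite mem_enum => u0; rewrite unity_rootE expf_card_pred.
  - exact: enum_uniq.
  - by rewrite -cardE cardC1.
by case/hasP => g _ g_prim; exists g.
Qed.

Lemma Fp_intr_val q (c : 'F_q) : ((val c)%:Z)%:~R = c.
Proof. by rewrite -pmulrn natr_Zp. Qed.

Lemma Fp_norm1_exponent q D (t : 'F_q) : prime q -> odd q -> ~~ (q%:Z %| D)%Z ->
  t ^+ 2 = D%:~R -> norm1_exponent D t q.-1.
Proof.
move=> q_pr q_odd qD tD; have charF := pchar_Fp q_pr.
have two := two_neq0_pchar q_pr q_odd charF.
have t0 := sqrt_neq0_pchar charF qD tD.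
have cardF : #|'F_q|.-1 = q.-1 by rewrite card_Fp.
split=> [x xG | ].
  rewrite -cardF expf_card_pred //; apply: contra_eq_neq xG => ->.
  by rewrite mul0r eq_sym oner_eq0.
have [g g_prim] : exists g : 'F_q, (q.-1).-primitive_root g.
  by rewrite -cardF; apply: finField_prim_root.
have g0 : g != 0 by rewrite (prim_root_eq0 g_prim) -lt0n -subn1 subn_gt0 prime_gt1.
have [x [xt xmt]] := qembed_conj_span D two t0
  (Fp_intr_val ((g + g^-1) / 2%:R)) (Fp_intr_val ((g - g^-1) / (2%:R * t))).
by exists x; rewrite xt ?xmt ?mulfV.
Qed.

Section InertModel.
Variables (q : nat) (D : int).
Hypotheses (q_prime : prime q) (q_odd : odd q).
Hypothesis D_nonsquare : forall c : 'F_q, c ^+ 2 != D%:~R.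

Let h : {poly 'F_q} := 'X^2 - (D%:~R)%:P.

Lemma size_inert_poly : size h = 3%N.
Proof. exact: size_XnsubC. Qed.

Lemma inert_poly_irr : monic_irreducible_poly h.
Proof.
split; last exact: monicXnsubC.
apply: cubic_irreducible => [|c]; first by rewrite size_inert_poly.
by rewrite /root !hornerE subr_eq0.
Qed.

Let K := {poly %/ h with inert_poly_irr}.
Let tK : K := 'qX.

Lemma pchar_inert : q \in [pchar K].
Proof. exact: (etrans (pchar_qpoly h q) (pchar_Fp q_prime)). Qed.

Lemma card_inert : #|K| = (q ^ 2)%N.
Proof. by rewrite card_qfpoly card_Fp // size_inert_poly. Qed.

Lemma qpolyC_inert_int (c : 'F_q) : qpolyC h c = ((val c)%:Z)%:~R :> K.
Proof. by rewrite -{1}(Fp_intr_val c) rmorph_int. Qed.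

Lemma in_inert_small (p : {poly 'F_q}) :
  (size p <= 2)%N -> in_qpoly h p = p :> {poly 'F_q}.
Proof.
by move=> sp; apply: in_qpoly_small; rewrite (mk_monicE inert_poly_irr) size_inert_poly.
Qed.

Lemma in_inert_C (c : 'F_q) : in_qpoly h c%:P = qpolyC h c :> K.
Proof.
by apply: val_inj; apply: in_inert_small; rewrite size_polyC; case: (c != 0).
Qed.

Lemma inert_sqrt : tK ^+ 2 = D%:~R.
Proof.
have in_h : in_qpoly h h = 0 :> K.
  apply: val_inj; rewrite /= (mk_monicE inert_poly_irr).
  by rewrite Pdiv.RingMonic.rmodpp // monicXnsubC.
rewrite /tK /qpolyX -rmorphXn.
have -> : ('X^2 : {poly 'F_q}) = h + (D%:~R)%:P by rewrite /h subrK.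
by rewrite rmorphD /= in_h add0r in_inert_C rmorph_int.
Qed.

Lemma inert_span (u : K) : exists a b : int, u = a%:~R + b%:~R * tK.
Proof.
set p : {poly 'F_q} := val u.
have sp : (size p <= 2)%N.
  apply: leq_trans (size_npoly u) _.
  by rewrite (mk_monicE inert_poly_irr) size_inert_poly.
have pE : p = (p`_0)%:P + (p`_1)%:P * 'X.
  apply/polyP => i; rewrite coefD coefC coefMX coefC.
  by case: i => [|[|i]] /=; rewrite ?addr0 ?add0r // nth_default // (leq_trans sp).
exists (val p`_0)%:Z, (val p`_1)%:Z; rewrite -!qpolyC_inert_int.
have -> : u = in_qpoly h p by apply: val_inj; rewrite [RHS]in_inert_small.
by rewrite {1}pE rmorphD rmorphM /= !in_inert_C.
Qed.

(* (tK^q)^2 = tK^2 forces tK^q = +-tK.  If tK^q = tK, the Frobenius would fix all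
   of K = F_q + F_q tK, so the cyclic group K^* of order q^2 - 1 would have
   exponent dividing q - 1. *)
Lemma inert_frobenius_sqrt : tK ^+ q = - tK.
Proof.
have Fr_int (z : int) : (z%:~R : K) ^+ q = z%:~R.
  by rewrite -(pFrobenius_autE pchar_inert) rmorph_int.
have : (tK ^+ q - tK) * (tK ^+ q + tK) = 0.
  by rewrite -subr_sqr -exprM (mulnC q 2) exprM inert_sqrt Fr_int subrr.
move/eqP; rewrite mulf_eq0 subr_eq0 addr_eq0 => /orP[/eqP Fr_tK | /eqP //].
have Fr_id (u : K) : u ^+ q = u.
  have [a [b ->]] := inert_span u.
  rewrite -(pFrobenius_autE pchar_inert) rmorphD rmorphM !rmorph_int /=.
  by rewrite pFrobenius_autE Fr_tK.
have [g g_prim] := finField_prim_root (K : finFieldType).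
have g0 : g != 0.
  rewrite (prim_root_eq0 g_prim) card_inert -lt0n -subn1 subn_gt0.
  by rewrite -{1}(expn0 q) ltn_exp2l ?prime_gt1.
have : (#|K|.-1 %| q.-1)%N.
  rewrite (prim_order_dvd g_prim); apply/eqP/(mulfI g0).
  by rewrite -exprS prednK ?prime_gt0 // Fr_id mulr1.
rewrite card_inert => /dvdn_leq; have := prime_gt1 q_prime; nia.
Qed.

Lemma inert_frobenius_qembed x : qembed D tK x ^+ q = qembed D (- tK) x.
Proof.
rewrite -(pFrobenius_autE pchar_inert) rmorph_qembed /=.
by rewrite pFrobenius_autE inert_frobenius_sqrt.
Qed.

Lemma inert_model : exists (K : fieldType) (t : K),
  [/\ q \in [pchar K], t ^+ 2 = D%:~R & norm1_exponent D t q.+1].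
Proof.
exists K, tK; split; [exact: pchar_inert | exact: inert_sqrt | split].
  by move=> x xG; rewrite exprS inert_frobenius_qembed.
have [g g_prim] := finField_prim_root (K : finFieldType).
have cardK : #|K|.-1 = (q.-1 * q.+1)%N.
  by rewrite card_inert; have := prime_gt0 q_prime; nia.
rewrite cardK in g_prim.
have := dvdn_prim_root g_prim (dvdn_mull _ (dvdnn q.+1)).
rewrite mulnK //; set u := g ^+ q.-1 => u_prim.
have [a [b uE]] := inert_span u.
have [x [xt _]] := qembed_span D tK (two_neq0_pchar q_prime q_odd pchar_inert) a b.
exists x; last by rewrite xt -uE.
by rewrite -inert_frobenius_qembed -exprS xt -uE prim_expr_order.
Qed.

End InertModel.

Lemma kronecker_odd_prime D q : prime q -> odd q -> ~~ (q%:Z %| D)%Z ->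
  kronecker D q = if [exists x : 'I_q, (q%:Z %| x%:Z ^+ 2 - D)%Z] then 1 else -1.
Proof.
move=> q_pr q_odd qD.
rewrite /kronecker primes_prime // big_seq1 logn_prime // eqxx expr1 /kron_prime.
by rewrite (negPf qD); case: eqP q_odd => // ->.
Qed.

Lemma norm1_model q D : prime q -> odd q -> ~~ (q%:Z %| D)%Z ->
  exists (K : fieldType) (t : K),
    [/\ q \in [pchar K], t ^+ 2 = D%:~R & norm1_exponent D t `|FD D q|].
Proof.
move=> q_pr q_odd qD; have charF := pchar_Fp q_pr.
rewrite /FD kronecker_odd_prime //; case: existsP => [[x0 x0D] | no_root].
  have tD : ((x0%:Z)%:~R : 'F_q) ^+ 2 = D%:~R.
    by apply/eqP; rewrite -subr_eq0 -rmorphXn -intrB -(dvdz_pcharf charF).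
  exists ('F_q : fieldType), (x0%:Z)%:~R; split=> //.
  by rewrite (_ : `|_|%N = q.-1); [exact: Fp_norm1_exponent | have := prime_gt0 q_pr; lia].
rewrite (_ : `|_|%N = q.+1); last by lia.
apply: inert_model => // c; apply: contra_notN no_root => /eqP cD.
have cq : (val c < q)%N by rewrite -[X in (_ < X)%N](Fp_cast q_pr) ltn_ord.
exists (Ordinal cq); rewrite (dvdz_pcharf charF) /=.
by rewrite intrB rmorphXn /= Fp_intr_val cD subrr.
Qed.

Lemma prime_dvd_coprimez N D q : prime q -> (q %| N)%N -> coprimez N%:Z D ->
  ~~ (q%:Z %| D)%Z.
Proof.
move=> q_pr qN; rewrite coprimezE dvdzE -prime_coprime //.
exact: coprime_dvdl.
Qed.

Lemma G_prime_exponentP D q m : prime q -> odd q -> ~~ (q%:Z %| D)%Z ->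
  (forall x, inG D q x -> qeqmod q (qpow D x m) (1, 0)) <-> (`|FD D q| %| m)%N.
Proof.
move=> q_pr q_odd qD; have [K [t [charK tD expK]]] := norm1_model q_pr q_odd qD.
exact: norm1_exponentP expK.
Qed.

Unset Implicit Arguments.

Theorem theorem4p3 (D : int) (N : nat) :
  squarefree_int D -> (1 < N)%N -> odd N -> squarefree_nat N -> ~~ prime N ->
  coprimez N%:Z D ->
  (G_Carmichael D N <->
   forall q : nat, prime q -> (q %| N)%N -> (FD D q %| FD D N)%Z).
Proof.
move=> _ N_gt1 N_odd sqN N_nprime coND.
have exponentP q : prime q -> (q %| N)%N ->
    (forall x, inG D q x -> qeqmod q (qpow D x `|FD D N|) (1, 0)) <->
    (FD D q %| FD D N)%Z.
  move=> q_pr qN; rewrite dvdzE.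
  exact: G_prime_exponentP (dvdn_odd qN N_odd) (prime_dvd_coprimez q_pr qN coND).
split=> [[_ _ _ _ carmichael] q q_pr qN | local].
  apply/(exponentP q q_pr qN) => x xG.
  have [y] := inG_chinese (squarefree_coprime_cofactor sqN q_pr qN) xG.
  rewrite mulnC divnK // => /carmichael/(qeqmod_dvd qN) y1 xy.
  exact: qeqmod_trans (qpow_eqmod D _ xy) y1.
split=> // x xG; apply: qeqmod_squarefree => // q q_pr qN.
by apply: (exponentP q q_pr qN).2 (local q q_pr qN) _ (inG_dvd qN xG).
Qed.
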